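(* Let $\mathcal M$ be the class of multilayer networks with $d$ aspects having a common vertex set $L_0$ and common elementary-layer sets $L_1,\dots,L_d$, let $p\subseteq\{0,\dots,d\}$ be nonempty, let $U$ be a set, and let $\mathcal G_c$ be the class of vertex-colored graphs whose vertex sets are subsets of $U$. Let $f:\mathcal M\to\mathcal G_c$ and $g:P_p\to\mathrm{Sym}(U)$ satisfy: (1) $f$ and $g$ are injective; (2) for all $M,M'\in\mathcal M$ and $\gamma\in\mathrm{Sym}(U)$, if $f(M)^\gamma=f(M')$ then $\gamma\in g(P_p)$; (3) for all $M\in\mathcal M$ and all $\boldsymbol\zeta\in P_p$, $f(M^{\boldsymbol\zeta})=f(M)^{g(\boldsymbol\zeta)}$. Then for all $M,M'\in\mathcal M$, $\mathrm{Iso}_p(M,M')=g^{-1}(\mathrm{Iso}(f(M),f(M')))=\{\boldsymbol\zeta\in P_p: g(\boldsymbol\zeta)\in\mathrm{Iso}(f(M),f(M'))\}$.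
   Context: A multilayer network with $d$ aspects is $M=(V_M,E_M,V,\mathbf L)$ with $\mathbf L=(L_1,\dots,L_d)$, $V_M\subseteq V\times L_1\times\dots\times L_d$, $E_M\subseteq V_M\times V_M$; write $L_0=V$ and $\mathbf v=(v_0,\dots,v_d)$. For nonempty $p\subseteq\{0,\dots,d\}$, $P_p=D_0\times\dots\times D_d$ with $D_a$ the symmetric group on $L_a$ if $a\in p$ and the trivial group on $L_a$ otherwise. For $\boldsymbol\zeta\in P_p$, $\mathbf v^{\boldsymbol\zeta}=(\zeta_0(v_0),\dots,\zeta_d(v_d))$ and $M^{\boldsymbol\zeta}=(\{\mathbf v^{\boldsymbol\zeta}:\mathbf v\in V_M\},\{(\mathbf v^{\boldsymbol\zeta},\mathbf u^{\boldsymbol\zeta}):(\mathbf v,\mathbf u)\in E_M\},V,\mathbf L)$; $\mathrm{Iso}_p(M,M')=\{\boldsymbol\zeta\in P_p:M^{\boldsymbol\zeta}=M'\}$. A vertex-colored graph is $G=(V_c,E_c,\pi,C)$ with $E_c\subseteq V_c\times V_c$ and $\pi:V_c\to C$. For a permutation $\gamma$ of $U$ and $V_c\subseteq U$, $G^\gamma=(\gamma(V_c),\{(\gamma(v),\gamma(u)):(v,u)\in E_c\},\pi\circ\gamma^{-1},C)$, and $\mathrm{Iso}(G,G')=\{\gamma\in\mathrm{Sym}(U):G^\gamma=G'\}$. *)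

From mathcomp Require Import all_boot.
From mathcomp Require Import boolp classical_sets.

Set Implicit Arguments.
Unset Strict Implicit.
Unset Printing Implicit Defensive.

Local Open Scope classical_set_scope.

Section Multilayer.
Variables (d : nat) (L : 'I_d.+1 -> Type).

(* node-layer tuples v = (v_0, ..., v_d) in V x L_1 x ... x L_d *)
Definition nltuple := forall a : 'I_d.+1, L a.

(* M = (V_M, E_M, V, L); V and L are fixed by the index L *)
Record mnet := MNet { mV : set nltuple ; mE : set (nltuple * nltuple) }.

Definition is_mnet (M : mnet) : Prop :=
  forall e, mE M e -> mV M e.1 /\ mV M e.2.

Definition Pp (p : {set 'I_d.+1}) : set (forall a : 'I_d.+1, L a -> L a) :=
  [set z | forall a, bijective (z a) /\ (a \notin p -> z a = id)].

Definition tact (z : forall a : 'I_d.+1, L a -> L a) (v : nltuple) : nltuple :=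
  fun a => z a (v a).

Definition mact (z : forall a : 'I_d.+1, L a -> L a) (M : mnet) : mnet :=
  MNet (tact z @` mV M) ((fun e => (tact z e.1, tact z e.2)) @` mE M).

Definition Iso_p (p : {set 'I_d.+1}) (M M' : mnet) :=
  [set z | Pp p z /\ mact z M = M'].

End Multilayer.

Section ColGraph.
Variables (U Col : Type).

(* G = (V_c, E_c, pi, C); the coloring pi : V_c -> C is represented by its graph
   (a set of pairs), the color set C by a subset of the ambient type Col. *)
Record cgraph := CGraph { gV : set U ; gE : set (U * U) ;
                          gpi : set (U * Col) ; gC : set Col }.

Definition is_cgraph (G : cgraph) : Prop :=
  (forall e, gE G e -> gV G e.1 /\ gV G e.2) /\
  (forall uc, gpi G uc -> gV G uc.1 /\ gC G uc.2) /\
  (forall u, gV G u -> exists c, gpi G (u, c)) /\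
  (forall u c c', gpi G (u, c) -> gpi G (u, c') -> c = c').

Definition Sym : set (U -> U) := [set h | bijective h].

(* G^gamma = (gamma(V_c), {(gamma v, gamma u)}, pi o gamma^-1, C) *)
Definition gact (h : U -> U) (G : cgraph) : cgraph :=
  CGraph (h @` gV G) ((fun e => (h e.1, h e.2)) @` gE G)
         ((fun uc => (h uc.1, uc.2)) @` gpi G) (gC G).

Definition Iso (G G' : cgraph) : set (U -> U) :=
  [set h | Sym h /\ gact h G = G'].

End ColGraph.

(* Since [f (M^z) = f(M)^(g z)], the equation [M^z = M'] implies
   [f(M)^(g z) = f(M')], and by injectivity of [f] on networks the converse
   holds as well, because [M^z] is again a network. Only injectivity of [f],
   equivariance (3) and [g z \in Sym(U)] are needed. *)
From mathcomp Require Import all_boot.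
From mathcomp Require Import boolp classical_sets.

Set Implicit Arguments.
Unset Strict Implicit.

Local Open Scope classical_set_scope.

Lemma mact_mnet (d : nat) (L : 'I_d.+1 -> Type)
    (z : forall a : 'I_d.+1, L a -> L a) (M : mnet L) :
  is_mnet M -> is_mnet (mact z M).
Proof.
move=> HM e /= [x Ex <-] /=.
by have [V1 V2] := HM _ Ex; split; [exists x.1 | exists x.2].
Qed.

Section EquivariantEncoding.
Variables (d : nat) (L : 'I_d.+1 -> Type) (p : {set 'I_d.+1}) (U Col : Type).
Variables (f : mnet L -> cgraph U Col)
          (g : (forall a : 'I_d.+1, L a -> L a) -> U -> U).
Hypothesis g_Sym : forall z, Pp p z -> Sym (g z).
Hypothesis f_inj : forall M M', is_mnet M -> is_mnet M' -> f M = f M' -> M = M'.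
Hypothesis f_equivariant :
  forall M z, is_mnet M -> Pp p z -> f (mact z M) = gact (g z) (f M).

Lemma Iso_p_encoded (M M' : mnet L) : is_mnet M -> is_mnet M' ->
  Iso_p p M M' = [set z | Pp p z /\ Iso (f M) (f M') (g z)].
Proof.
move=> HM HM'; apply/seteqP; split => z /= [Pz].
  move=> EzM; split=> //; split; first exact: g_Sym.
  by rewrite -f_equivariant // EzM.
move=> [_ EfM]; split=> //.
by apply: f_inj; [exact: mact_mnet | exact: HM' | rewrite f_equivariant].
Qed.

End EquivariantEncoding.

Theorem lemma1 (d : nat) (L : 'I_d.+1 -> Type) (p : {set 'I_d.+1})
  (U Col : Type)
  (f : mnet L -> cgraph U Col)
  (g : (forall a : 'I_d.+1, L a -> L a) -> U -> U) :
  p != finset.set0 ->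
  (* f : M -> G_c *)
  (forall M, is_mnet M -> is_cgraph (f M)) ->
  (* g : P_p -> Sym(U) *)
  (forall z, Pp p z -> Sym (g z)) ->
  (* (1) injectivity *)
  (forall M M', is_mnet M -> is_mnet M' -> f M = f M' -> M = M') ->
  (forall z z', Pp p z -> Pp p z' -> g z = g z' -> z = z') ->
  (* (2) *)
  (forall M M' (h : U -> U), is_mnet M -> is_mnet M' -> Sym h ->
     gact h (f M) = f M' -> (g @` Pp p) h) ->
  (* (3) *)
  (forall M z, is_mnet M -> Pp p z -> f (mact z M) = gact (g z) (f M)) ->
  forall M M', is_mnet M -> is_mnet M' ->
    Iso_p p M M' = Pp p `&` (g @^-1` Iso (f M) (f M')) /\
    Iso_p p M M' = [set z | Pp p z /\ Iso (f M) (f M') (g z)].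
Proof.
move=> _ _ g_Sym f_inj _ _ f_equivariant M M' HM HM'.
by rewrite (Iso_p_encoded g_Sym f_inj f_equivariant HM HM').
Qed.
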